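(* Let $\alpha\in[0,1)$ and let $$X(\sqrt{t},\alpha)=\{\sqrt{n}\,e^{2\pi i n\alpha}\ :\ n\in\mathbb{N}\}\subset\mathbb{C}.$$ The following four statements are equivalent: (a) $X(\sqrt{t},\alpha)$ is relatively dense; (b) $X(\sqrt{t},\alpha)$ is uniformly discrete; (c) $X(\sqrt{t},\alpha)$ is a Delone set; (d) $\alpha$ is badly approximable.
   Context: $\mathbb{C}$ is identified with $\mathbb{R}^2$, and $B(x,r)$ denotes the open disk of radius $r$ centered at $x$. A set $X\subset\mathbb{C}$ is $r$-relatively dense if $B(x,r)\cap X\neq\emptyset$ for every $x\in\mathbb{C}$, and relatively dense if it is $r$-relatively dense for some $r>0$. It is $s$-uniformly discrete if $\mathrm{Card}(B(x,s)\cap X)\le 1$ for every $x\in\mathbb{C}$, and uniformly discrete if this holds for some $s>0$. A Delone set is a set that is both relatively dense and uniformly discrete. A real number $\alpha$ is badly approximable if there is a constant $C>0$ with $q|q\alpha-p|\ge C$ for all $(p,q)\in\mathbb{Z}\times\mathbb{N}$. *)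

(* C is identified with R^2 = R * R. *)
From Stdlib Require Import Reals ZArith.
Open Scope R_scope.

Definition pt : Type := (R * R)%type.

Definition dist2 (p q : pt) : R :=
  sqrt ((fst p - fst q) ^ 2 + (snd p - snd q) ^ 2).

Definition in_ball (x : pt) (r : R) (y : pt) : Prop := dist2 x y < r.

Definition r_relatively_dense (r : R) (X : pt -> Prop) : Prop :=
  forall x : pt, exists y : pt, X y /\ in_ball x r y.

Definition relatively_dense (X : pt -> Prop) : Prop :=
  exists r : R, 0 < r /\ r_relatively_dense r X.

Definition s_uniformly_discrete (s : R) (X : pt -> Prop) : Prop :=
  forall x y z : pt, X y -> X z -> in_ball x s y -> in_ball x s z -> y = z.

Definition uniformly_discrete (X : pt -> Prop) : Prop :=
  exists s : R, 0 < s /\ s_uniformly_discrete s X.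

Definition Delone (X : pt -> Prop) : Prop :=
  relatively_dense X /\ uniformly_discrete X.

Definition badly_approximable (a : R) : Prop :=
  exists C : R, 0 < C /\
    forall (p : Z) (q : nat), (1 <= q)%nat ->
      INR q * Rabs (INR q * a - IZR p) >= C.

Definition Xsqrt (alpha : R) (y : pt) : Prop :=
  exists n : nat, (1 <= n)%nat /\
    y = (sqrt (INR n) * cos (2 * PI * INR n * alpha),
         sqrt (INR n) * sin (2 * PI * INR n * alpha)).

From Stdlib Require Import Reals ZArith Lra Lia Psatz Classical.
Open Scope R_scope.

(* Write z_n = sqrt n e^(2 pi i n alpha) and let ||t|| be the distance from t to Z.  For n < m = n + q,
   |z_n - z_m|^2 = (sqrt m - sqrt n)^2 + 2 sqrt(n m) (1 - cos (2 pi q alpha)), and 1 - cos (2 pi t)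
   is comparable to ||t||^2; so the radial part is about q^2 / n and the angular part about
   n ||q alpha||^2, and at the scale n ~ q^2 both are governed by q ||q alpha||.
   If q ||q alpha|| >= C for all q, the two parts cannot be small together, which separates the points.
   For density, take a Dirichlet approximation p/q in lowest terms with q <= Q ~ |x|; bad
   approximability forces q >= C Q, and the arguments of the q points following |x|^2 then
   approximate all multiples of 1/q, so one of them lies near x.
   If alpha is not badly approximable, choose q with q ||q alpha|| < eta tiny: then z_N and z_(N+q)
   with N ~ q^2 / eta are at distance O(sqrt eta), and the point of modulus sqrt N ~ 3 r q whose
   argument lies halfway between two consecutive multiples of 1/q (shifted by N alpha) has no z_n
   within distance r. *)

Lemma PI_sqr_bounds : 9 < PI ^ 2 <= 16.
Proof. pose proof PI2_3_2; pose proof PI_4; split; nra. Qed.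

Lemma cos_period_Z (x : R) (k : Z) : cos (x + 2 * IZR k * PI) = cos x.
Proof.
  destruct k as [| p | p].
  - f_equal; ring.
  - change (IZR (Z.pos p)) with (IPR p); rewrite <- INR_IPR; apply cos_period.
  - change (IZR (Z.neg p)) with (- IPR p); rewrite <- INR_IPR.
    rewrite <- (cos_period _ (Pos.to_nat p)); f_equal; ring.
Qed.

Lemma one_minus_cos_le (a : R) : 1 - cos a <= a ^ 2 / 2.
Proof.
  destruct (Rle_dec (Rabs a) 2) as [Ha | Ha].
  - assert (Ha2 : -2 <= a <= 2) by (revert Ha; unfold Rabs; destruct Rcase_abs; lra).
    destruct (pre_cos_bound a 0 ltac:(lra) ltac:(lra)) as [Hcos _].
    unfold cos_approx, cos_term in Hcos; simpl in Hcos; lra.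
  - assert (4 < a ^ 2) by (rewrite <- pow2_abs; nra).
    pose proof (COS_bound a); lra.
Qed.

Lemma one_minus_cos_ge (a : R) : Rabs a <= PI -> a ^ 2 / 12 <= 1 - cos a.
Proof.
  intros Ha; pose proof PI_sqr_bounds; pose proof PI_RGT_0.
  destruct (Rle_dec (Rabs a) 2) as [H2 | H2].
  - assert (Ha2 : -2 <= a <= 2) by (revert H2; unfold Rabs; destruct Rcase_abs; lra).
    destruct (pre_cos_bound a 0 ltac:(lra) ltac:(lra)) as [_ Hcos].
    unfold cos_approx, cos_term in Hcos; simpl in Hcos; unfold fact in Hcos; simpl in Hcos.
    assert (a ^ 2 <= 4) by nra. nra.
  - assert (cos a <= -1/3).
    { replace (cos a) with (cos (Rabs a)) by (unfold Rabs; destruct Rcase_abs; [apply cos_neg | reflexivity]).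
      apply Rle_trans with (cos 2).
      - pose proof (Rabs_pos a); apply cos_decr_1; lra.
      - destruct (pre_cos_bound 2 0 ltac:(lra) ltac:(lra)) as [_ Hcos].
        unfold cos_approx, cos_term in Hcos; simpl in Hcos; unfold fact in Hcos; simpl in Hcos; lra. }
    assert (a ^ 2 <= PI ^ 2) by (rewrite <- pow2_abs; apply pow_incr; split; [apply Rabs_pos | lra]).
    lra.
Qed.

Lemma one_minus_cos_2PI_le (t : R) (k : Z) : 1 - cos (2 * PI * t) <= 2 * PI ^ 2 * (t - IZR k) ^ 2.
Proof.
  replace (2 * PI * t) with (2 * PI * (t - IZR k) + 2 * IZR k * PI) by ring.
  rewrite cos_period_Z.
  pose proof (one_minus_cos_le (2 * PI * (t - IZR k))); lra.
Qed.

Lemma one_minus_cos_2PI_ge (t d : R) :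
  0 <= d -> (forall k : Z, d <= Rabs (t - IZR k)) -> 3 * d ^ 2 <= 1 - cos (2 * PI * t).
Proof.
  intros Hd Hk; pose proof PI_sqr_bounds; pose proof PI_RGT_0.
  set (k := up (t - 1/2)); destruct (archimed (t - 1/2)) as [Hk1 Hk2]; fold k in Hk1, Hk2.
  assert (Hround : Rabs (t - IZR k) <= 1/2) by (apply Rabs_le; lra).
  specialize (Hk k).
  replace (2 * PI * t) with (2 * PI * (t - IZR k) + 2 * IZR k * PI) by ring.
  rewrite cos_period_Z.
  assert (Habs : Rabs (2 * PI * (t - IZR k)) = 2 * PI * Rabs (t - IZR k))
    by (rewrite Rabs_mult, Rabs_right; lra).
  assert (Hge := one_minus_cos_ge (2 * PI * (t - IZR k)) ltac:(nra)).
  rewrite <- pow2_abs, Habs in Hge.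
  assert (d ^ 2 <= Rabs (t - IZR k) ^ 2) by (apply pow_incr; lra).
  nra.
Qed.

Definition sqdist (p q : pt) : R := (fst p - fst q) ^ 2 + (snd p - snd q) ^ 2.

Lemma sqdist_nonneg (p q : pt) : 0 <= sqdist p q.
Proof. unfold sqdist; apply Rplus_le_le_0_compat; apply pow2_ge_0. Qed.

Lemma in_ball_iff (x y : pt) (r : R) : 0 <= r -> in_ball x r y <-> sqdist x y < r ^ 2.
Proof.
  intros Hr; unfold in_ball, dist2; fold (sqdist x y).
  rewrite <- (sqrt_pow2 r Hr) at 1; split.
  - apply sqrt_lt_0_alt.
  - intros H; apply sqrt_lt_1_alt; split; [apply sqdist_nonneg | exact H].
Qed.

Lemma sqdist_le_double_sum (x y z : pt) : sqdist y z <= 2 * (sqdist x y + sqdist x z).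
Proof.
  destruct x as [x1 x2], y as [y1 y2], z as [z1 z2]; unfold sqdist; simpl.
  pose proof (pow2_ge_0 (2 * x1 - y1 - z1)); pose proof (pow2_ge_0 (2 * x2 - y2 - z2)).
  nra.
Qed.

(* The angle t is measured in turns. *)
Definition polar (r t : R) : pt := (r * cos (2 * PI * t), r * sin (2 * PI * t)).

Lemma sqdist_polar_origin (r t : R) : sqdist (polar r t) (0, 0) = r ^ 2.
Proof.
  unfold sqdist, polar; simpl.
  pose proof (sin2_cos2 (2 * PI * t)) as H; unfold Rsqr in H; nra.
Qed.

Lemma sqdist_polar (a b s t : R) :
  sqdist (polar a s) (polar b t) = (a - b) ^ 2 + 2 * a * b * (1 - cos (2 * PI * (s - t))).
Proof.
  unfold sqdist, polar; simpl.
  replace (2 * PI * (s - t)) with (2 * PI * s - 2 * PI * t) by ring.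
  rewrite cos_minus.
  pose proof (sin2_cos2 (2 * PI * s)); pose proof (sin2_cos2 (2 * PI * t)).
  unfold Rsqr in *; nra.
Qed.

Lemma polar_surjective (x : pt) : exists t, x = polar (sqrt (sqdist x (0, 0))) t.
Proof.
  destruct x as [x1 x2]; unfold sqdist; cbn [fst snd]; rewrite !Rminus_0_r.
  set (r := sqrt (x1 ^ 2 + x2 ^ 2)).
  assert (Hr2 : r ^ 2 = x1 ^ 2 + x2 ^ 2) by (apply pow2_sqrt; nra).
  assert (Hr0 : 0 <= r) by apply sqrt_pos.
  destruct (Req_dec r 0) as [Hr | Hr].
  { assert (x1 = 0 /\ x2 = 0) as [-> ->] by (rewrite Hr in Hr2; pose proof (pow2_ge_0 x1); pose proof (pow2_ge_0 x2);
    split; apply Rsqr_0_uniq; unfold Rsqr; lra).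
    exists 0; unfold polar; rewrite Hr; f_equal; ring. }
  assert (HPI := PI_RGT_0).
  set (c := x1 / r).
  assert (Hc : c ^ 2 + (x2 / r) ^ 2 = 1).
  { replace (c ^ 2 + (x2 / r) ^ 2) with ((x1 ^ 2 + x2 ^ 2) / r ^ 2) by (unfold c; field; exact Hr).
    rewrite <- Hr2; field; exact Hr. }
  assert (Hc1 : -1 <= c <= 1) by nra.
  assert (Hs : sqrt (1 - c²) = Rabs (x2 / r)).
  { rewrite <- sqrt_Rsqr_abs; f_equal; unfold Rsqr; lra. }
  assert (Hx1 : x1 = r * c) by (unfold c; field; exact Hr).
  assert (Hx2 : x2 = r * (x2 / r)) by (field; exact Hr).
  destruct (Rle_dec 0 x2) as [Hx | Hx].
  - exists (acos c / (2 * PI)); unfold polar.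
    replace (2 * PI * (acos c / (2 * PI))) with (acos c) by (field; lra).
    rewrite cos_acos, sin_acos, Hs, Rabs_right by (unfold Rdiv; try apply Rle_ge; nra).
    f_equal; assumption.
  - exists (- acos c / (2 * PI)); unfold polar.
    replace (2 * PI * (- acos c / (2 * PI))) with (- acos c) by (field; lra).
    rewrite cos_neg, sin_neg, cos_acos, sin_acos, Hs, Rabs_left by (unfold Rdiv; nra).
    f_equal; [assumption | lra].
Qed.

Lemma sqdist_polar_le (a b s t : R) (k : Z) : 0 <= a -> 0 <= b ->
  sqdist (polar a s) (polar b t) <= (a - b) ^ 2 + 4 * PI ^ 2 * a * b * (s - t - IZR k) ^ 2.
Proof.
  intros Ha Hb; rewrite sqdist_polar.
  pose proof (one_minus_cos_2PI_le (s - t) k); assert (0 <= a * b) by nra; nra.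
Qed.

Lemma sqdist_polar_ge (a b s t d : R) : 0 <= a -> 0 <= b -> 0 <= d ->
  (forall k : Z, d <= Rabs (s - t - IZR k)) ->
  (a - b) ^ 2 + 6 * a * b * d ^ 2 <= sqdist (polar a s) (polar b t).
Proof.
  intros Ha Hb Hd Hk; rewrite sqdist_polar.
  pose proof (one_minus_cos_2PI_ge (s - t) d Hd Hk); assert (0 <= a * b) by nra; nra.
Qed.

Definition spiral (alpha : R) (n : nat) : pt := polar (sqrt (INR n)) (INR n * alpha).

Lemma Xsqrt_spiral (alpha : R) (y : pt) :
  Xsqrt alpha y <-> exists n : nat, (1 <= n)%nat /\ y = spiral alpha n.
Proof.
  unfold Xsqrt, spiral, polar.
  assert (E : forall n, 2 * PI * (INR n * alpha) = 2 * PI * INR n * alpha) by (intros; ring).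
  setoid_rewrite E; reflexivity.
Qed.

Lemma spiral_inj (alpha : R) (n m : nat) : spiral alpha n = spiral alpha m -> n = m.
Proof.
  intros E; apply INR_eq.
  apply (f_equal (fun y => sqdist y (0, 0))) in E; unfold spiral in E.
  rewrite !sqdist_polar_origin, !pow2_sqrt in E by apply pos_INR; exact E.
Qed.

Lemma nat_between (x : R) : 0 <= x -> exists N : nat, x < INR N <= x + 1.
Proof.
  intros Hx; destruct (archimed x) as [H1 H2].
  assert (0 <= up x)%Z by (apply le_IZR; lra).
  exists (Z.to_nat (up x)); rewrite INR_IZR_INZ, Z2Nat.id by lia; lra.
Qed.

Lemma pigeonhole (Q : nat) (f : nat -> nat) :
  (forall i, (i <= Q)%nat -> (f i < Q)%nat) -> exists i j, (i < j <= Q)%nat /\ f i = f j.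
Proof.
  revert f; induction Q as [| Q IH]; intros f Hf.
  { specialize (Hf 0%nat ltac:(lia)); lia. }
  destruct (classic (exists i, (i <= Q)%nat /\ f i = f (S Q))) as [[i [Hi Hfi]] | Hnew].
  { exists i, (S Q); split; [lia | exact Hfi]. }
  (* f (S Q) is not hit below S Q, so relabel the value Q by f (S Q) *)
  set (g := fun i => if Nat.eqb (f i) Q then f (S Q) else f i).
  assert (Hhit : forall i, (i <= Q)%nat -> f i <> f (S Q)) by (intros i Hi E; apply Hnew; eauto).
  destruct (IH g) as [i [j [Hij Hgij]]].
  - intros i Hi; specialize (Hf (S Q) ltac:(lia)) as HfS; specialize (Hhit i Hi).
    unfold g; destruct (Nat.eqb_spec (f i) Q); [lia |].
    specialize (Hf i ltac:(lia)); lia.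
  - exists i, j; split; [lia |]; unfold g in Hgij.
    pose proof (Hhit i ltac:(lia)); pose proof (Hhit j ltac:(lia)).
    destruct (Nat.eqb_spec (f i) Q), (Nat.eqb_spec (f j) Q); congruence.
Qed.

Lemma dirichlet (alpha : R) (Q : nat) : (1 <= Q)%nat ->
  exists (q : nat) (p : Z), (1 <= q <= Q)%nat /\ Rabs (INR q * alpha - IZR p) < 1 / INR Q.
Proof.
  intros HQ; assert (HQR : 1 <= INR Q) by (apply (le_INR 1); lia).
  set (box := fun i : nat => INR Q * frac_part (INR i * alpha)).
  assert (Hbox : forall i, (0 <= Int_part (box i) < Z.of_nat Q)%Z).
  { intros i; pose proof (base_fp (INR i * alpha)); destruct (base_Int_part (box i)).
    assert (-1 < Int_part (box i))%Z by (apply lt_IZR; unfold box in *; nra).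
    assert (Int_part (box i) < Z.of_nat Q)%Z
      by (apply lt_IZR; rewrite <- INR_IZR_INZ; unfold box in *; nra).
    lia. }
  destruct (pigeonhole Q (fun i => Z.to_nat (Int_part (box i)))) as [i [j [Hij Hfij]]].
  { intros i _; specialize (Hbox i); lia. }
  assert (Hsame : Rabs (box j - box i) < 1).
  { assert (E : Int_part (box i) = Int_part (box j)) by (pose proof (Hbox i); pose proof (Hbox j); lia).
    destruct (base_Int_part (box i)), (base_Int_part (box j)); rewrite E in *; apply Rabs_def1; lra. }
  exists (j - i)%nat, (Int_part (INR j * alpha) - Int_part (INR i * alpha))%Z; split; [lia |].
  rewrite minus_INR, minus_IZR by lia.
  replace ((INR j - INR i) * alpha - (IZR (Int_part (INR j * alpha)) - IZR (Int_part (INR i * alpha))))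
    with ((box j - box i) / INR Q) by (unfold box, frac_part; field; lra).
  unfold Rdiv; rewrite Rabs_mult, (Rabs_right (/ INR Q)) by (apply Rle_ge, Rlt_le, Rinv_0_lt_compat; lra).
  apply Rmult_lt_compat_r; [apply Rinv_0_lt_compat |]; lra.
Qed.

Lemma dirichlet_coprime (alpha : R) (Q : nat) : (1 <= Q)%nat ->
  exists (q : nat) (p u v : Z), (1 <= q <= Q)%nat /\
    Rabs (INR q * alpha - IZR p) < 1 / INR Q /\ (u * p + v * Z.of_nat q = 1)%Z.
Proof.
  intros HQ; destruct (dirichlet alpha Q HQ) as [q0 [p0 [Hq0 Happrox]]].
  set (g := Z.gcd p0 (Z.of_nat q0)).
  assert (Hg : (1 <= g)%Z) by (pose proof (Z.gcd_nonneg p0 (Z.of_nat q0));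
    assert (g <> 0%Z) by (intros E; apply Z.gcd_eq_0 in E; lia); lia).
  destruct (Z.gcd_divide_l p0 (Z.of_nat q0)) as [p Hp].
  destruct (Z.gcd_divide_r p0 (Z.of_nat q0)) as [q Hq].
  fold g in Hp, Hq.
  assert (Hcop : Z.gcd p q = 1%Z).
  { rewrite <- (Z.div_mul p g), <- (Z.div_mul q g), <- Hp, <- Hq by lia.
    apply Z.gcd_div_gcd; [lia | reflexivity]. }
  destruct (Z.gcd_bezout p q 1 Hcop) as [u [v Huv]].
  assert (Hq1 : (1 <= q)%Z) by nia.
  exists (Z.to_nat q), p, u, v; rewrite Z2Nat.id by lia; split; [| split; [| exact Huv]].
  - split; [lia | nia].
  - rewrite INR_IZR_INZ, Z2Nat.id by lia.
    assert (E : INR q0 * alpha - IZR p0 = IZR g * (IZR q * alpha - IZR p))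
      by (rewrite INR_IZR_INZ, Hq, Hp, !mult_IZR; ring).
    rewrite E, Rabs_mult, (Rabs_right (IZR g)) in Happrox by (apply Rle_ge, IZR_le; lia).
    assert (1 <= IZR g) by (apply IZR_le; lia).
    pose proof (Rabs_pos (IZR q * alpha - IZR p)); nra.
Qed.

Lemma coprime_multiples_dense (alpha y : R) (q : nat) (p u v : Z) :
  (1 <= q)%nat -> (u * p + v * Z.of_nat q = 1)%Z ->
  exists (i : nat) (t : Z), (i < q)%nat /\
    Rabs (INR i * alpha - IZR t - y) <= 1 / INR q + Rabs (INR q * alpha - IZR p).
Proof.
  intros Hq Huv.
  set (j := Int_part (INR q * y)).
  set (i := ((j * u) mod Z.of_nat q)%Z).
  set (t := (- (j * v) - (j * u) / Z.of_nat q * p)%Z).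
  assert (Hi : (0 <= i < Z.of_nat q)%Z) by (apply Z.mod_pos_bound; lia).
  (* i = j u (mod q) and u p = 1 (mod q), so i p = j (mod q) *)
  assert (Hip : (i * p = j + Z.of_nat q * t)%Z).
  { assert (Ei : i = (j * u - Z.of_nat q * (j * u / Z.of_nat q))%Z)
      by (pose proof (Z.div_mod (j * u) (Z.of_nat q)); unfold i; lia).
    assert (Ej : (j * (u * p + v * Z.of_nat q) = j)%Z) by (rewrite Huv; ring).
    rewrite Ei; unfold t; nia. }
  exists (Z.to_nat i), t; split; [lia |].
  rewrite INR_IZR_INZ, Z2Nat.id by lia.
  assert (HqR : 1 <= INR q) by (apply (le_INR 1); lia).
  assert (HiR : 0 <= IZR i <= INR q) by (rewrite INR_IZR_INZ; split; apply IZR_le; lia).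
  assert (Ht : IZR t = (IZR i * IZR p - IZR j) / INR q).
  { apply (f_equal IZR) in Hip; rewrite mult_IZR, plus_IZR, mult_IZR, <- INR_IZR_INZ in Hip.
    rewrite Hip; field; lra. }
  replace (IZR i * alpha - IZR t - y)
    with ((IZR j - INR q * y) / INR q + IZR i / INR q * (INR q * alpha - IZR p))
    by (rewrite Ht; field; lra).
  eapply Rle_trans; [apply Rabs_triang | apply Rplus_le_compat].
  - destruct (base_Int_part (INR q * y)) as [Hj1 Hj2]; fold j in Hj1, Hj2.
    unfold Rdiv; rewrite Rabs_mult, (Rabs_right (/ INR q)) by (apply Rle_ge, Rlt_le, Rinv_0_lt_compat; lra).
    apply Rmult_le_compat_r; [apply Rlt_le, Rinv_0_lt_compat; lra |].
    apply Rabs_le; lra.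
  - assert (Hiq : 0 <= IZR i / INR q <= 1).
    { split; [apply Rmult_le_pos; [| apply Rlt_le, Rinv_0_lt_compat]; lra |].
      apply Rmult_le_reg_r with (INR q); [lra |].
      replace (IZR i / INR q * INR q) with (IZR i) by (field; lra); lra. }
    rewrite Rabs_mult, (Rabs_right (IZR i / INR q)) by lra.
    pose proof (Rabs_pos (INR q * alpha - IZR p)); nra.
Qed.

Lemma badly_approximable_multiples_dense (alpha : R) : badly_approximable alpha ->
  exists K, 0 < K /\ forall (Q : nat) (y : R), (1 <= Q)%nat ->
    exists (i : nat) (t : Z), (i < Q)%nat /\ INR Q * Rabs (INR i * alpha - IZR t - y) < K.
Proof.
  intros [C [HC HBA]]; exists (1 / C + 1); split.
  { pose proof (Rinv_0_lt_compat C HC); lra. }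
  intros Q y HQ.
  destruct (dirichlet_coprime alpha Q HQ) as [q [p [u [v [Hq [Happrox Huv]]]]]].
  destruct (coprime_multiples_dense alpha y q p u v (proj1 Hq) Huv) as [i [t [Hi Hdense]]].
  exists i, t; split; [lia |].
  assert (HqQ : 1 <= INR q <= INR Q) by (split; [apply (le_INR 1) | apply le_INR]; lia).
  set (e := Rabs (INR q * alpha - IZR p)) in *.
  assert (HeQ : e * INR Q < 1).
  { apply (Rmult_lt_compat_r (INR Q)) in Happrox; [| lra].
    replace (1 / INR Q * INR Q) with 1 in Happrox by (field; lra); exact Happrox. }
  (* bad approximability forces the Dirichlet denominator q above C Q *)
  assert (HCq : C * INR Q < INR q) by (specialize (HBA p q (proj1 Hq)); fold e in HBA; nra).
  assert (HQq : INR Q / INR q < 1 / C).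
  { apply Rmult_lt_reg_r with (C * INR q); [nra |].
    replace (INR Q / INR q * (C * INR q)) with (C * INR Q) by (field; lra).
    replace (1 / C * (C * INR q)) with (INR q) by (field; lra); exact HCq. }
  apply (Rmult_le_compat_l (INR Q)) in Hdense; [| lra].
  replace (INR Q * (1 / INR q + e)) with (INR Q / INR q + e * INR Q) in Hdense by (field; lra).
  lra.
Qed.

Lemma not_badly_approximable (alpha eta : R) : ~ badly_approximable alpha -> 0 < eta ->
  exists (p : Z) (q : nat), (1 <= q)%nat /\ INR q * Rabs (INR q * alpha - IZR p) < eta.
Proof.
  intros HnBA Heta; apply NNPP; intros Hno; apply HnBA.
  exists eta; split; [exact Heta |]; intros p q Hq.
  apply Rnot_lt_ge; intros Hlt; apply Hno; eauto.
Qed.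

Lemma separation_bound (a b q c : R) : 1 <= a <= b -> 0 < q -> b ^ 2 = a ^ 2 + q -> 0 < c ->
  Rmin 1 c <= (a - b) ^ 2 + 6 * a * b * (c / q) ^ 2.
Proof.
  intros Hab Hq Hb Hc.
  set (w := c / q); assert (Hw : w * q = c) by (unfold w; field; lra).
  assert (Hw0 : 0 < w) by (unfold w; apply Rdiv_lt_0_compat; lra).
  assert (Hang : 0 <= 6 * a * b * w ^ 2) by (assert (0 <= a * b) by nra; nra).
  destruct (Rle_dec (2 * a) b) as [Hfar | Hnear].
  - pose proof (Rmin_l 1 c); nra.
  - (* b - a = q / (a + b) > q / (3 a), and AM-GM balances it against the angular term *)
    assert (Hgap : q < 3 * a * (b - a)) by nra.
    assert (3 * a * (b - a) * w <= (a - b) ^ 2 + 6 * a * b * w ^ 2)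
      by (pose proof (pow2_ge_0 (b - a - 3 / 2 * a * w)); nra).
    pose proof (Rmin_r 1 c); nra.
Qed.

Lemma spiral_separated (alpha C : R) (n m : nat) : 0 < C ->
  (forall (p : Z) (q : nat), (1 <= q)%nat -> INR q * Rabs (INR q * alpha - IZR p) >= C) ->
  (1 <= n < m)%nat -> Rmin 1 C <= sqdist (spiral alpha n) (spiral alpha m).
Proof.
  intros HC HBA Hnm.
  set (q := INR (m - n)).
  assert (Hq : 1 <= q) by (apply (le_INR 1); lia).
  assert (Hmq : INR m = INR n + q) by (unfold q; rewrite minus_INR by lia; ring).
  assert (Hn : 1 <= INR n) by (apply (le_INR 1); lia).
  apply Rle_trans with
    ((sqrt (INR n) - sqrt (INR m)) ^ 2 + 6 * sqrt (INR n) * sqrt (INR m) * (C / q) ^ 2).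
  - apply separation_bound; try lra.
    + split; [rewrite <- sqrt_1 | ]; apply sqrt_le_1_alt; lra.
    + rewrite !pow2_sqrt; lra.
  - apply sqdist_polar_ge; try apply sqrt_pos.
    + apply Rlt_le, Rdiv_lt_0_compat; lra.
    + intros k; specialize (HBA (- k)%Z (m - n)%nat ltac:(lia)); fold q in HBA.
      replace (INR n * alpha - INR m * alpha - IZR k) with (- (q * alpha - IZR (- k)))
        by (rewrite Hmq, opp_IZR; ring).
      rewrite Rabs_Ropp; apply Rmult_le_reg_l with q; [lra |].
      replace (q * (C / q)) with C by (field; lra); lra.
Qed.

Lemma badly_approximable_uniformly_discrete (alpha : R) :
  badly_approximable alpha -> uniformly_discrete (Xsqrt alpha).
Proof.
  intros [C [HC HBA]].
  set (T := Rmin 1 C); assert (HT : 0 < T) by (apply Rmin_pos; lra).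
  set (s := sqrt T / 2); assert (Hs : 0 < s) by (pose proof (sqrt_lt_R0 T HT); unfold s; lra).
  assert (Hs2 : s ^ 2 = T / 4) by (unfold s, Rdiv; rewrite Rpow_mult_distr, pow2_sqrt by lra; field).
  exists s; split; [exact Hs |]; intros x y z Hy Hz Hxy Hxz.
  apply Xsqrt_spiral in Hy as [n [Hn ->]]; apply Xsqrt_spiral in Hz as [m [Hm ->]].
  apply in_ball_iff in Hxy, Hxz; try lra.
  destruct (Nat.lt_trichotomy n m) as [Hnm | [-> | Hnm]]; [exfalso | reflexivity | exfalso].
  - pose proof (spiral_separated alpha C n m HC HBA ltac:(lia)) as Hsep; fold T in Hsep.
    pose proof (sqdist_le_double_sum x (spiral alpha n) (spiral alpha m)); lra.
  - pose proof (spiral_separated alpha C m n HC HBA ltac:(lia)) as Hsep; fold T in Hsep.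
    pose proof (sqdist_le_double_sum x (spiral alpha m) (spiral alpha n)); lra.
Qed.

Lemma close_pair_bound (N Q eta e : R) : 0 < eta <= 1 -> 1 <= Q ->
  Q ^ 2 < N * eta -> N * eta <= Q ^ 2 + eta -> Q * Rabs e < eta ->
  (sqrt N - sqrt (N + Q)) ^ 2 + 4 * PI ^ 2 * sqrt N * sqrt (N + Q) * e ^ 2 < 300 * eta.
Proof.
  intros Heta HQ HN1 HN2 HeQ.
  assert (HN : 1 <= N) by nra.
  set (a := sqrt N); set (b := sqrt (N + Q)).
  assert (Ha : a ^ 2 = N) by (apply pow2_sqrt; lra).
  assert (Hb : b ^ 2 = N + Q) by (apply pow2_sqrt; lra).
  assert (Ha0 : 0 < a) by (apply sqrt_lt_R0; lra); assert (Hb0 : 0 <= b) by apply sqrt_pos.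
  assert (Hrad : (a - b) ^ 2 < eta / 4).
  { assert (Hab : (b - a) * (b + a) = Q) by nra.
    assert (Hba : 0 <= b - a) by nra.
    assert (H2a : (b - a) * (2 * a) <= Q) by nra.
    assert ((b - a) ^ 2 * (4 * N) <= Q ^ 2)
      by (rewrite <- Ha; replace ((b - a) ^ 2 * (4 * a ^ 2)) with (((b - a) * (2 * a)) ^ 2) by ring;
          apply pow_incr; nra).
    nra. }
  assert (Hang : a * b * e ^ 2 <= 4 * eta).
  { assert (Hee : (Q * e) ^ 2 < eta ^ 2).
    { replace ((Q * e) ^ 2) with ((Q * Rabs e) ^ 2) by (rewrite !Rpow_mult_distr, pow2_abs; ring).
      pose proof (Rabs_pos e); assert (0 <= Q * Rabs e) by (apply Rmult_le_pos; lra); nra. }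
    assert (N * eta <= N) by (pose proof (Rmult_le_compat_l N eta 1 ltac:(lra) (proj2 Heta)); lra).
    assert (Q <= N) by nra.
    assert (a * b <= 2 * N) by (pose proof (pow2_ge_0 (a - b)); nra).
    assert (He2 : e ^ 2 <= (Q * e) ^ 2)
      by (rewrite Rpow_mult_distr; pose proof (pow2_ge_0 e); assert (1 <= Q ^ 2) by nra; nra).
    assert (eta * (N * e ^ 2) <= eta * (2 * eta)).
    { pose proof (Rmult_le_compat_r (e ^ 2) _ _ (pow2_ge_0 e) HN2).
      rewrite Rpow_mult_distr in Hee, He2; nra. }
    assert (N * e ^ 2 <= 2 * eta) by (apply Rmult_le_reg_l with eta; lra).
    pose proof (pow2_ge_0 e); nra. }
  pose proof PI_sqr_bounds; nra.
Qed.

Lemma spiral_close_pair (alpha eps : R) : ~ badly_approximable alpha -> 0 < eps ->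
  exists N q : nat, (1 <= N)%nat /\ (1 <= q)%nat /\
    sqdist (spiral alpha N) (spiral alpha (N + q)) < eps.
Proof.
  intros HnBA Heps.
  set (eta := Rmin 1 (eps / 300)).
  assert (Heta : 0 < eta <= 1) by (split; [apply Rmin_pos; lra | apply Rmin_l]).
  assert (Heta_eps : 300 * eta <= eps) by (unfold eta; pose proof (Rmin_r 1 (eps / 300)); lra).
  destruct (not_badly_approximable alpha eta HnBA (proj1 Heta)) as [p [q [Hq Happrox]]].
  assert (HQ : 1 <= INR q) by (apply (le_INR 1); lia).
  (* at N ~ q^2 / eta the radial gap q^2 / (4 N) and the angular gap N ||q alpha||^2 are both O(eta) *)
  destruct (nat_between (INR q ^ 2 / eta)) as [N [HN1 HN2]].
  { apply Rmult_le_pos; [nra | apply Rlt_le, Rinv_0_lt_compat; lra]. }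
  apply (Rmult_lt_compat_r eta) in HN1; [| lra]; apply (Rmult_le_compat_r eta) in HN2; [| lra].
  replace (INR q ^ 2 / eta * eta) with (INR q ^ 2) in HN1 by (field; lra).
  replace ((INR q ^ 2 / eta + 1) * eta) with (INR q ^ 2 + eta) in HN2 by (field; lra).
  exists N, q; split; [apply INR_le; simpl; nra | split; [exact Hq |]].
  eapply Rle_lt_trans; [apply (sqdist_polar_le _ _ _ _ (- p)); apply sqrt_pos |].
  replace (INR N * alpha - INR (N + q) * alpha - IZR (- p)) with (- (INR q * alpha - IZR p))
    by (rewrite plus_INR, opp_IZR; ring).
  rewrite plus_INR; replace ((- (INR q * alpha - IZR p)) ^ 2) with ((INR q * alpha - IZR p) ^ 2) by ring.
  pose proof (close_pair_bound (INR N) (INR q) eta (INR q * alpha - IZR p) Heta HQ HN1 HN2 Happrox).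
  lra.
Qed.

Lemma uniformly_discrete_badly_approximable (alpha : R) :
  uniformly_discrete (Xsqrt alpha) -> badly_approximable alpha.
Proof.
  intros [s [Hs Hud]]; apply NNPP; intros HnBA.
  destruct (spiral_close_pair alpha (s ^ 2) HnBA ltac:(nra)) as [N [q [HN [Hq Hclose]]]].
  assert (Hspiral : forall n, (1 <= n)%nat -> Xsqrt alpha (spiral alpha n))
    by (intros n Hn; apply Xsqrt_spiral; eauto).
  assert (E : spiral alpha N = spiral alpha (N + q)).
  { apply (Hud (spiral alpha N)); try (apply Hspiral; lia); apply in_ball_iff; try lra.
    unfold sqdist; rewrite !Rminus_diag; nra. }
  apply spiral_inj in E; lia.
Qed.

Lemma dist_Z_half_shift (alpha : R) (m p : Z) (q : nat) : (1 <= q)%nat ->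
  Rabs (IZR m * (INR q * alpha - IZR p)) <= 1 / 4 ->
  forall k : Z, 1 / (4 * INR q) <= Rabs (IZR m * alpha + 1 / (2 * INR q) - IZR k).
Proof.
  intros Hq Hm k.
  assert (HQ : 1 <= INR q) by (apply (le_INR 1); lia).
  (* m alpha + 1/(2q) is within |m (q alpha - p)| / q of (2 m p + 1) / (2 q), an odd multiple of 1/(2q) *)
  set (odd := IZR (2 * m * p + 1 - 2 * Z.of_nat q * k)).
  assert (Hodd : 1 <= Rabs odd) by (unfold odd; rewrite <- abs_IZR; apply IZR_le; lia).
  apply Rmult_le_reg_r with (2 * INR q); [lra |].
  replace (1 / (4 * INR q) * (2 * INR q)) with (1 / 2) by (field; lra).
  rewrite <- (Rabs_right (2 * INR q)) at 2 by lra; rewrite <- Rabs_mult.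
  replace ((IZR m * alpha + 1 / (2 * INR q) - IZR k) * (2 * INR q))
    with (odd + 2 * (IZR m * (INR q * alpha - IZR p)))
    by (unfold odd; rewrite !minus_IZR, !plus_IZR, !mult_IZR, <- INR_IZR_INZ; field; lra).
  pose proof (Rabs_triang_inv odd (- (2 * (IZR m * (INR q * alpha - IZR p))))) as Htri.
  rewrite Rabs_Ropp, Rabs_mult, (Rabs_right 2) in Htri by lra.
  replace (odd - - (2 * (IZR m * (INR q * alpha - IZR p))))
    with (odd + 2 * (IZR m * (INR q * alpha - IZR p))) in Htri by ring.
  lra.
Qed.

Lemma Rabs_sqr_sub_le (a b r : R) : 0 <= a -> 0 <= b -> Rabs (a - b) < r ->
  Rabs (a ^ 2 - b ^ 2) <= r * (2 * a + r).
Proof.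
  intros Ha Hb Hab.
  replace (a ^ 2 - b ^ 2) with ((a - b) * (a + b)) by ring.
  rewrite Rabs_mult, (Rabs_right (a + b)) by lra.
  assert (b < a + r) by (revert Hab; unfold Rabs; destruct Rcase_abs; lra).
  apply Rmult_le_compat; try lra; apply Rabs_pos.
Qed.

Lemma hole_bound (r a b Q : R) : 0 < r -> 1 <= Q -> 3 * r * Q < a -> Rabs (a - b) < r ->
  r ^ 2 <= (a - b) ^ 2 + 6 * a * b * (1 / (4 * Q)) ^ 2.
Proof.
  intros Hr HQ Ha Hab.
  set (w := 1 / (4 * Q)); assert (Hw : w * Q = 1 / 4) by (unfold w; field; lra).
  assert (Hw0 : 0 < w) by (unfold w; apply Rdiv_lt_0_compat; lra).
  assert (b >= a - r) by (revert Hab; unfold Rabs; destruct Rcase_abs; lra).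
  assert (Hr3 : 3 * r <= a) by nra.
  assert (Haw : 3 * r / 4 < a * w).
  { replace (3 * r / 4) with (3 * r * Q * w)
      by (replace (3 * r * Q * w) with (3 * r * (w * Q)) by ring; rewrite Hw; field).
    apply Rmult_lt_compat_r; lra. }
  assert (a ^ 2 * w ^ 2 >= 9 * r ^ 2 / 16)
    by (replace (a ^ 2 * w ^ 2) with ((a * w) ^ 2) by ring; nra).
  pose proof (pow2_ge_0 (a - b)); pose proof (pow2_ge_0 w); nra.
Qed.

Lemma spiral_hole (alpha r : R) : ~ badly_approximable alpha -> 0 < r ->
  exists x : pt, forall n : nat, r ^ 2 <= sqdist x (spiral alpha n).
Proof.
  intros HnBA Hr.
  (* eps is small enough that |m (q alpha - p)| <= 1/4 whenever m = N - n with |sqrt N - sqrt n| < r *)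
  set (eps := 1 / (12 * r * (3 * r + 1))).
  assert (Heps : 0 < eps) by (apply Rdiv_lt_0_compat; nra).
  destruct (not_badly_approximable alpha eps HnBA Heps) as [p [q [Hq Happrox]]].
  set (Q := INR q) in *; set (e := Q * alpha - IZR p) in *.
  assert (HQ : 1 <= Q) by (apply (le_INR 1); lia).
  destruct (nat_between ((3 * r * Q) ^ 2)) as [N [HN1 HN2]]; [nra |].
  set (R0 := sqrt (INR N)).
  assert (HR0 : R0 ^ 2 = INR N) by (apply pow2_sqrt, pos_INR).
  assert (HR0pos : 0 <= R0) by apply sqrt_pos.
  assert (HR0lo : 3 * r * Q < R0) by nra.
  assert (HR0hi : R0 <= (3 * r + 1) * Q).
  { assert (R0 ^ 2 <= ((3 * r + 1) * Q) ^ 2) by nra.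
    assert (0 <= (3 * r + 1) * Q) by nra; nra. }
  exists (polar R0 (INR N * alpha + 1 / (2 * Q))); intros n.
  set (b := sqrt (INR n)).
  assert (Hb : b ^ 2 = INR n) by (apply pow2_sqrt, pos_INR).
  assert (Hb0 : 0 <= b) by apply sqrt_pos.
  destruct (Rle_dec r (Rabs (R0 - b))) as [Hfar | Hnear].
  - apply Rle_trans with ((R0 - b) ^ 2 + 6 * R0 * b * 0 ^ 2).
    + rewrite <- (pow2_abs (R0 - b)); pose proof (pow_incr r (Rabs (R0 - b)) 2 (conj (Rlt_le _ _ Hr) Hfar)); lra.
    + unfold spiral; fold b; apply sqdist_polar_ge; try lra; intros k; apply Rabs_pos.
  - apply Rnot_le_lt in Hnear.
    set (m := (Z.of_nat N - Z.of_nat n)%Z).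
    assert (Hm : IZR m = INR N - INR n) by (unfold m; rewrite minus_IZR, <- !INR_IZR_INZ; reflexivity).
    assert (Hmabs : Rabs (IZR m) <= 3 * r * (3 * r + 1) * Q).
    { rewrite Hm, <- HR0, <- Hb.
      pose proof (Rabs_sqr_sub_le R0 b r HR0pos Hb0 Hnear); nra. }
    assert (Hme : Rabs (IZR m * e) <= 1 / 4).
    { rewrite Rabs_mult.
      assert (Hreps : 3 * r * (3 * r + 1) * eps = 1 / 4) by (unfold eps; field; nra).
      pose proof (Rabs_pos e); pose proof (Rabs_pos (IZR m)).
      apply Rle_trans with (3 * r * (3 * r + 1) * (Q * Rabs e)); [nra |].
      rewrite <- Hreps; apply Rmult_le_compat_l; nra. }
    apply Rle_trans with ((R0 - b) ^ 2 + 6 * R0 * b * (1 / (4 * Q)) ^ 2).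
    + exact (hole_bound r R0 b Q Hr HQ HR0lo Hnear).
    + unfold spiral; fold b; apply sqdist_polar_ge; try lra.
      * apply Rlt_le, Rdiv_lt_0_compat; lra.
      * intros k; replace (INR N * alpha + 1 / (2 * Q) - INR n * alpha - IZR k)
          with (IZR m * alpha + 1 / (2 * Q) - IZR k) by (rewrite Hm; ring).
        exact (dist_Z_half_shift alpha m p q Hq Hme k).
Qed.

Lemma spiral_dense (alpha : R) : badly_approximable alpha ->
  exists r, 0 < r /\ forall x : pt, exists n : nat, (1 <= n)%nat /\ sqdist x (spiral alpha n) < r ^ 2.
Proof.
  intros HBA; destruct (badly_approximable_multiples_dense alpha HBA) as [K [HK Hdense]].
  exists (2 + 14 * K); split; [lra |]; intros x.
  destruct (polar_surjective x) as [y ->]; set (rho := sqrt _).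
  assert (Hrho : 0 <= rho) by apply sqrt_pos.
  (* the points z_(M+i), i < Q, just beyond modulus rho have arguments (K/Q)-dense modulo 1 *)
  destruct (nat_between rho Hrho) as [Q [HQ1 HQ2]].
  destruct (nat_between (rho ^ 2) ltac:(nra)) as [M [HM1 HM2]].
  assert (HQ : (1 <= Q)%nat) by (destruct Q; [simpl in HQ1; lra | lia]).
  destruct (Hdense Q (y - INR M * alpha) HQ) as [i [t [Hi Hclose]]].
  assert (HiR : INR i + 1 <= INR Q) by (rewrite <- S_INR; apply le_INR; lia).
  assert (HM : (1 <= M)%nat) by (destruct M; [simpl in HM1; nra | lia]).
  exists (M + i)%nat; split; [lia |].
  eapply Rle_lt_trans; [apply (sqdist_polar_le _ _ _ _ (- t)); apply sqrt_pos |].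
  set (D := INR i * alpha - IZR t - (y - INR M * alpha)) in *.
  replace (y - INR (M + i) * alpha - IZR (- t)) with (- D) by (unfold D; rewrite plus_INR, opp_IZR; ring).
  set (b := sqrt (INR (M + i))).
  assert (Hb : b ^ 2 = INR M + INR i) by (unfold b; rewrite pow2_sqrt, plus_INR; [| apply pos_INR]; ring).
  assert (Hb0 : 0 <= b) by apply sqrt_pos.
  assert (Hbrho : rho <= b <= rho + 2).
  { assert (rho ^ 2 < b ^ 2) by (pose proof (pos_INR i); lra).
    assert (b ^ 2 <= (rho + 2) ^ 2) by nra.
    assert (0 <= rho + b) by lra; split; nra. }
  assert (HrhoQ : rho * b <= 3 * INR Q ^ 2).
  { assert (rho * b <= rho * (rho + 2)) by (apply Rmult_le_compat_l; lra).
    assert (1 <= INR Q) by (apply (le_INR 1); lia); nra. }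
  assert (HQD : (INR Q * D) ^ 2 < K ^ 2).
  { replace ((INR Q * D) ^ 2) with ((INR Q * Rabs D) ^ 2) by (rewrite !Rpow_mult_distr, pow2_abs; ring).
    pose proof (Rabs_pos D); assert (0 <= INR Q * Rabs D) by (apply Rmult_le_pos; lra); nra. }
  replace ((- D) ^ 2) with (D ^ 2) by ring; pose proof PI_sqr_bounds.
  assert (rho * b * D ^ 2 <= 3 * K ^ 2) by (rewrite Rpow_mult_distr in HQD; pose proof (pow2_ge_0 D); nra).
  assert (0 <= rho * b * D ^ 2) by (pose proof (pow2_ge_0 D); apply Rmult_le_pos; nra).
  nra.
Qed.

Lemma badly_approximable_relatively_dense (alpha : R) :
  badly_approximable alpha -> relatively_dense (Xsqrt alpha).
Proof.
  intros HBA; destruct (spiral_dense alpha HBA) as [r [Hr Hdense]].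
  exists r; split; [exact Hr |]; intros x.
  destruct (Hdense x) as [n [Hn Hclose]].
  exists (spiral alpha n); split; [apply Xsqrt_spiral; eauto | apply in_ball_iff; lra].
Qed.

Lemma relatively_dense_badly_approximable (alpha : R) :
  relatively_dense (Xsqrt alpha) -> badly_approximable alpha.
Proof.
  intros [r [Hr Hrd]]; apply NNPP; intros HnBA.
  destruct (spiral_hole alpha r HnBA Hr) as [x Hhole].
  destruct (Hrd x) as [y [Hy Hxy]].
  apply Xsqrt_spiral in Hy as [n [_ ->]]; apply in_ball_iff in Hxy; [| lra].
  specialize (Hhole n); lra.
Qed.

Theorem theorem2 (alpha : R) (Halpha : 0 <= alpha < 1) :
  (relatively_dense (Xsqrt alpha) <-> badly_approximable alpha) /\
  (uniformly_discrete (Xsqrt alpha) <-> badly_approximable alpha) /\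
  (Delone (Xsqrt alpha) <-> badly_approximable alpha).
Proof.
  pose proof (relatively_dense_badly_approximable alpha).
  pose proof (badly_approximable_relatively_dense alpha).
  pose proof (uniformly_discrete_badly_approximable alpha).
  pose proof (badly_approximable_uniformly_discrete alpha).
  unfold Delone; tauto.
Qed.
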